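(* Let the number of agents be even, $n=2p$. Then the Bloc formation mechanism Nash implements the majority correspondence $Maj$ in the following sense: for every preference profile $R$ with $|Maj(R)|=1$, every Nash equilibrium outcome is $Maj(R)$; and for every $R$ with $Maj(R)=\{a,b\}$, the unique Nash equilibrium outcome is the lottery assigning probability $1/2$ to each of $a$ and $b$.
   Context: Agents $I=\{1,\dots,n\}$, $n=2p$, options $A=\{a,b\}$, each agent with a strict preference over $A$; preferences over lotteries follow stochastic dominance: an agent preferring $x$ weakly (strictly) prefers $\beta$ to $\eta$ iff $\beta(x)\ge\eta(x)$ ($>$). Majority correspondence: $Maj(R)=a$ if $|\{i:aR_ib\}|\ge p+1$, $Maj(R)=b$ if $|\{i:bR_ia\}|\ge p+1$, and $Maj(R)=\{a,b\}$ otherwise. Bloc formation mechanism: each agent sends $m_i=(v_i,c_i)$ with $v_i\in A$ and $c_i$ a set of exactly $p$ agents other than $i$. For $x\in A$, a set $B$ with $|B|\ge p+1$ is a bloc in favor of $x$ in $m$ if $v_i=x$ and $c_i\subseteq B$ for every $i\in B$. If $m$ admits a bloc in favor of $x$ the outcome is $x$; otherwise the outcome is the lottery $\eta(m)$ with $\eta^x(m)=\sum_{i}\eta_i(m)\mathbf 1\{v_i=x\}$, $\eta_i(m)=|\{j\ne i: i\in c_j\}|/(np)$. *)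

From mathcomp Require Import all_boot all_order all_algebra.
Set Implicit Arguments. Unset Strict Implicit. Unset Printing Implicit Defensive.
Import Order.TTheory GRing.Theory Num.Theory.
Local Open Scope ring_scope.

Definition alt := bool.
Definition opt_a : alt := true.
Definition opt_b : alt := false.

(* Agents: 'I_(2*p).  A strict preference over the two options is
   determined by the preferred option: R i = x means x P_i y. *)
Definition agent (p : nat) := 'I_(2 * p).
Definition profile (p : nat) := {ffun agent p -> alt}.

Definition lottery := {ffun alt -> rat}.
Definition pure (x : alt) : lottery := [ffun y => ((y == x)%:R : rat)].
Definition half_lottery : lottery := [ffun _ => (1 / 2)%R].

(* Stochastic dominance for an agent whose preferred option is x:
   strict preference of beta over eta iff beta(x) > eta(x). *)
Definition sd_strict (x : alt) (beta eta : lottery) : bool := (eta x < beta x)%R.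

Definition supporters p (R : profile p) (x : alt) : {set agent p} :=
  [set i | R i == x].
Definition Maj p (R : profile p) : {set alt} :=
  if (p.+1 <= #|supporters R opt_a|)%N then [set opt_a]
  else if (p.+1 <= #|supporters R opt_b|)%N then [set opt_b]
  else [set: alt].

Definition message p := (alt * {set agent p})%type.
Definition valid_msg p (i : agent p) (mi : message p) : bool :=
  (#|mi.2| == p) && (i \notin mi.2).
Definition mprofile p := {ffun agent p -> message p}.
Definition valid_profile p (m : mprofile p) : bool :=
  [forall i, valid_msg i (m i)].

Definition is_bloc p (m : mprofile p) (x : alt) (B : {set agent p}) : bool :=
  (p.+1 <= #|B|)%N && [forall i in B, ((m i).1 == x) && ((m i).2 \subset B)].
Definition has_bloc p (m : mprofile p) (x : alt) : bool :=
  [exists B, is_bloc m x B].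

Definition eta_i p (m : mprofile p) (i : agent p) : rat :=
  (#|[set j | (j != i) && (i \in (m j).2)]|%:R / (2 * p * p)%:R)%R.
Definition eta_lottery p (m : mprofile p) : lottery :=
  [ffun x => (\sum_(i : agent p | (m i).1 == x) eta_i m i)%R].

Definition outcome p (m : mprofile p) : lottery :=
  if has_bloc m opt_a then pure opt_a
  else if has_bloc m opt_b then pure opt_b
  else eta_lottery m.

Definition deviate p (m : mprofile p) (i : agent p) (mi : message p) : mprofile p :=
  [ffun j => if j == i then mi else m j].

Definition nash_eq p (R : profile p) (m : mprofile p) : Prop :=
  valid_profile m /\
  forall (i : agent p) (mi : message p), valid_msg i mi ->
    ~~ sd_strict (R i) (outcome (deviate m i mi)) (outcome m).

From mathcomp Require Import all_boot all_order all_algebra.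
From mathcomp Require Import zify ring.
Set Implicit Arguments. Unset Strict Implicit. Unset Printing Implicit Defensive.
Import Order.TTheory GRing.Theory Num.Theory.

(* An equilibrium bloc for x consists of supporters of x: a member preferring
   the other option could vote for it, which leaves no bloc for x (every such
   bloc contains the least one) and gives her favourite positive probability.
   Without a bloc, the probability of an option is proportional to the number
   of names its voters receive, and each agent wants to raise it for her
   favourite. Hence every named agent votes sincerely, and a sincere agent
   either names only sincere allies or names all voters of her option, who are
   then sincere. Under a strict majority for x this turns the sincere x-voters
   into a bloc, a contradiction; under a tie it forces everybody to name her
   p - 1 allies and one opponent, so that each option receives p^2 of the
   2 p^2 names. Both naming patterns are indeed equilibria. *)

Lemma exists_subset_card (T : finType) (A : {set T}) n :
  n <= #|A| -> exists2 B : {set T}, B \subset A & #|B| = n.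
Proof.
case/card_geqP => s [s_uniq <- sA]; exists [set x in s].
  by apply/subsetP => x; rewrite inE; apply: sA.
by rewrite cardsE; apply/card_uniqP.
Qed.

Lemma card_setD1 (T : finType) (A : {set T}) x : x \in A -> #|A :\ x| = #|A|.-1.
Proof. by move=> xA; rewrite (cardsD1 x A) xA add1n. Qed.

Lemma ltn_sum (T : finType) (F G : T -> nat) i :
  (forall j, F j <= G j) -> F i < G i -> \sum_j F j < \sum_j G j.
Proof.
move=> leFG ltFGi; rewrite (bigD1 i) //= [X in _ < X](bigD1 i) //=.
by rewrite -addSn leq_add // leq_sum.
Qed.

Section BlocMechanism.

Variable p : nat.
Hypothesis p_gt0 : 0 < p.

Implicit Types (R : profile p) (m : mprofile p) (i j k l : agent p).
Implicit Types (x y z : alt) (B C : {set agent p}).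

Local Notation mass := (2 * p * p)%N.

Definition voters m x : {set agent p} := [set k | (m k).1 == x].

Definition namers m k : {set agent p} := [set j | (j != k) && (k \in (m j).2)].

Definition vote_weight m x k : nat := if (m k).1 == x then #|namers m k| else 0.

Definition eta_count m x : nat := \sum_k vote_weight m x k.

Definition score m x : nat :=
  if has_bloc m x then mass else if has_bloc m (~~ x) then 0 else eta_count m x.

Lemma level_set_opp (f : agent p -> alt) x :
  [set k | f k == ~~ x] = ~: [set k | f k == x].
Proof. by apply/setP => k; rewrite !inE; case: (f k); case: x. Qed.

Lemma card_level_sets (f : agent p -> alt) x :
  #|[set k | f k == x]| + #|[set k | f k == ~~ x]| = 2 * p.
Proof. by rewrite level_set_opp cardsC card_ord. Qed.

Lemma voters_opp m x : voters m (~~ x) = ~: voters m x.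
Proof. exact: level_set_opp. Qed.

Lemma card_supporters_opp R x :
  #|supporters R x| + #|supporters R (~~ x)| = 2 * p.
Proof. exact: card_level_sets. Qed.

Lemma card_voters_opp m x : #|voters m x| + #|voters m (~~ x)| = 2 * p.
Proof. exact: card_level_sets. Qed.

Lemma valid_card m i : valid_profile m -> #|(m i).2| = p.
Proof. by move=> /forallP /(_ i) /andP [/eqP ->]. Qed.

Lemma valid_notin m i : valid_profile m -> i \notin (m i).2.
Proof. by move=> /forallP /(_ i) /andP []. Qed.

Lemma valid_named_neq m j k : valid_profile m -> k \in (m j).2 -> j != k.
Proof. by move=> v kc; apply: contraTneq kc => ->; apply: valid_notin. Qed.

Lemma blocP m x B :
  reflect (p < #|B| /\ forall i, i \in B -> (m i).1 = x /\ (m i).2 \subset B)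
          (is_bloc m x B).
Proof.
apply: (iffP andP) => [[B_big /forall_inP HB] | [B_big HB]]; split => //.
  by move=> i /HB /andP [/eqP -> ->].
by apply/forall_inP => i /HB [-> ->]; rewrite eqxx.
Qed.

Lemma majorities_meet B C : p < #|B| -> p < #|C| -> exists2 i, i \in B & i \in C.
Proof.
move=> B_big C_big; have := cardsUI B C; have := max_card (B :|: C).
rewrite card_ord => leU eqUI.
have : 0 < #|B :&: C| by lia.
by case/card_gt0P => i; rewrite inE => /andP [iB iC]; exists i.
Qed.

Lemma has_bloc_uniq m x y : has_bloc m x -> has_bloc m y -> x = y.
Proof.
move=> /existsP [B /blocP [B_big HB]] /existsP [C /blocP [C_big HC]].
have [i iB iC] := majorities_meet B_big C_big.
by have [<- _] := HB i iB; have [<- _] := HC i iC.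
Qed.

Lemma named_card_gt m i C : valid_profile m -> i \in C -> (m i).2 \subset C ->
  p < #|C|.
Proof.
move=> v iC sub; have : i |: (m i).2 \subset C by rewrite subUset sub1set iC.
by move/subset_leq_card; rewrite cardsU1 valid_notin // valid_card.
Qed.

Lemma closed_bloc m x C i : valid_profile m -> i \in C ->
  (forall j, j \in C -> (m j).1 = x /\ (m j).2 \subset C) -> is_bloc m x C.
Proof.
move=> v iC HC; apply/blocP; split => //.
exact: named_card_gt v iC (HC i iC).2.
Qed.

Lemma is_blocI m x B C : valid_profile m ->
  is_bloc m x B -> is_bloc m x C -> is_bloc m x (B :&: C).
Proof.
move=> v /blocP [B_big HB] /blocP [C_big HC].
have [i iB iC] := majorities_meet B_big C_big.
apply: (@closed_bloc _ _ _ i v); first by rewrite inE iB iC.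
move=> j; rewrite inE => /andP [/HB [vj sB] /HC [_ sC]].
by rewrite subsetI sB sC.
Qed.

Lemma least_bloc m x : valid_profile m -> has_bloc m x ->
  exists2 M, is_bloc m x M & forall B, is_bloc m x B -> M \subset B.
Proof.
move=> v /existsP [B0 bloc_B0].
case: (arg_minnP (fun B => #|B|) bloc_B0) => M bloc_M M_min.
exists M => // B bloc_B; apply/setIidPr/eqP.
by rewrite eqEcard subsetIr M_min // is_blocI.
Qed.

Lemma few_voters_no_bloc m x : #|voters m x| <= p -> ~~ has_bloc m x.
Proof.
move=> small; apply/existsP => -[B /blocP [B_big HB]].
have : B \subset voters m x by apply/subsetP => i /HB [vi _]; rewrite inE vi.
by move/subset_leq_card; lia.
Qed.

Lemma exists_named_voter m x : valid_profile m -> ~~ has_bloc m (~~ x) ->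
  exists j k, k \in (m j).2 /\ (m k).1 = x.
Proof.
move=> v nb.
have [/existsP [j /exists_inP [k kc /eqP vk]] | none] :=
  boolP [exists j, [exists k in (m j).2, (m k).1 == x]]; first by exists j, k.
have in_opp j k : k \in (m j).2 -> (m k).1 = ~~ x.
  move=> kc; move: none; rewrite negb_exists => /forallP /(_ j).
  rewrite negb_exists_in => /forall_inP /(_ k kc).
  by case: (m k).1; case: (x).
have agents_gt0 : 0 < 2 * p by rewrite muln_gt0 p_gt0.
have [k kc] : exists k, k \in (m (Ordinal agents_gt0)).2.
  by apply/card_gt0P; rewrite valid_card.
case/negP: nb; apply/existsP; exists (voters m (~~ x)).
apply: (@closed_bloc _ _ _ k v); first by rewrite inE (in_opp _ _ kc).
move=> j; rewrite inE => /eqP vj; split => //.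
by apply/subsetP => l lc; rewrite inE (in_opp _ _ lc).
Qed.

Lemma outcome_bloc m x : has_bloc m x -> outcome m = pure x.
Proof.
rewrite /outcome /opt_a /opt_b; case: x => bx; first by rewrite bx.
by case: ifP => [bt|_]; [have := has_bloc_uniq bt bx | rewrite bx].
Qed.

Lemma score_bloc m x : has_bloc m x -> score m x = mass.
Proof. by rewrite /score => ->. Qed.

Lemma score_bloc_opp m x : has_bloc m (~~ x) -> score m x = 0.
Proof.
move=> bnx; rewrite /score bnx; case: ifP => // bx.
by have := has_bloc_uniq bx bnx; case: (x).
Qed.

Lemma score_no_bloc m x :
  ~~ has_bloc m x -> ~~ has_bloc m (~~ x) -> score m x = eta_count m x.
Proof. by rewrite /score => /negbTE -> /negbTE ->. Qed.

Lemma outcome_score m x : outcome m x = ((score m x)%:R / mass%:R)%R.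
Proof.
have mass_neq0 : (mass%:R : rat) != 0%R.
  by rewrite pnatr_eq0 -lt0n !muln_gt0 p_gt0.
have [bx | nbx] := boolP (has_bloc m x).
  by rewrite score_bloc // (outcome_bloc bx) ffunE eqxx divff.
have [bnx | nbnx] := boolP (has_bloc m (~~ x)).
  by rewrite score_bloc_opp // (outcome_bloc bnx) ffunE; case: (x); rewrite mul0r.
have -> : outcome m = eta_lottery m.
  by rewrite /outcome /opt_a /opt_b; case: (x) nbx nbnx => /negbTE -> /negbTE ->.
rewrite score_no_bloc // /eta_lottery ffunE /eta_i -mulr_suml -natr_sum.
by rewrite /eta_count /vote_weight -big_mkcond.
Qed.

Lemma sd_strict_score z m m' :
  sd_strict z (outcome m') (outcome m) = (score m z < score m' z).
Proof.
rewrite /sd_strict !outcome_score ltr_pM2r ?ltr_nat //.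
by rewrite invr_gt0 ltr0n !muln_gt0 p_gt0.
Qed.

Lemma eta_count_namers m x : valid_profile m ->
  eta_count m x = \sum_j #|(m j).2 :&: voters m x|.
Proof.
move=> v; pose named j k := [&& (m k).1 == x, j != k & k \in (m j).2].
transitivity (\sum_k \sum_j (named j k : nat)).
  apply: eq_bigr => k _; rewrite /vote_weight /named /namers.
  case: ((m k).1 == x); last by rewrite big1.
  by rewrite -sum1dep_card big_mkcond; apply: eq_bigr => j _ /=; case: ifP.
rewrite exchange_big; apply: eq_bigr => j _.
rewrite -sum1_card [RHS]big_mkcond /=; apply: eq_bigr => k _; rewrite /named !inE.
case kc: (k \in (m j).2); last by rewrite !andbF.
by rewrite (valid_named_neq v kc) andbT; case: ((m k).1 == x).
Qed.

Lemma eta_count_total m x : valid_profile m ->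
  eta_count m x + eta_count m (~~ x) = mass.
Proof.
move=> v; rewrite !eta_count_namers // -big_split /=.
rewrite voters_opp (eq_bigr (fun=> p)) ?sum_nat_const ?card_ord 1?mulnC //=.
move=> j _.
by rewrite -setDE cardsID valid_card.
Qed.

Lemma eta_count_pos m x : valid_profile m -> ~~ has_bloc m (~~ x) ->
  0 < eta_count m x.
Proof.
move=> v nb; have [j [k [kc vk]]] := exists_named_voter v nb.
rewrite eta_count_namers // (bigD1 j) //= ltn_addr // card_gt0.
by apply/set0Pn; exists k; rewrite !inE kc vk eqxx.
Qed.

Lemma eta_count_lt_mass m x : valid_profile m -> ~~ has_bloc m x ->
  eta_count m x < mass.
Proof.
move=> v nb; rewrite -(eta_count_total x v) -ltn_subLR // subnn.
by apply: eta_count_pos v _; rewrite negbK.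
Qed.

Lemma score_le_mass m x : valid_profile m -> score m x <= mass.
Proof.
move=> v; rewrite /score; case: ifP => // _; case: ifP => // _.
by rewrite -(eta_count_total x v) leq_addr.
Qed.

Lemma score_pos m x : valid_profile m -> ~~ has_bloc m (~~ x) -> 0 < score m x.
Proof.
move=> v nb; have [bx | nbx] := boolP (has_bloc m x).
  by rewrite score_bloc // !muln_gt0 p_gt0.
by rewrite score_no_bloc // eta_count_pos.
Qed.

Lemma vote_weight_le m m' x k :
  ((m k).1 == x -> (m' k).1 == x /\ namers m k \subset namers m' k) ->
  vote_weight m x k <= vote_weight m' x k.
Proof.
rewrite /vote_weight; case: ifP => // _ /(_ isT) [-> sub].
exact: subset_leq_card.
Qed.

Lemma eta_count_le m m' x :
  (forall k, (m k).1 == x -> (m' k).1 == x /\ namers m k \subset namers m' k) ->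
  eta_count m x <= eta_count m' x.
Proof. by move=> H; apply: leq_sum => k _; apply/vote_weight_le/H. Qed.

Lemma eta_count_tie m x : valid_profile m -> (forall z, #|voters m z| = p) ->
  (forall j, voters m (m j).1 :\ j \subset (m j).2) -> eta_count m x = p * p.
Proof.
move=> v tie allies; rewrite eta_count_namers //.
have own j : #|(m j).2 :&: voters m (m j).1| = p.-1.
  have -> : (m j).2 :&: voters m (m j).1 = voters m (m j).1 :\ j.
    apply/eqP; rewrite eqEsubset [X in _ && X]subsetI allies subD1set !andbT.
    apply/subsetP => k; rewrite !inE => /andP [kc ->]; rewrite andbT eq_sym.
    exact: valid_named_neq v kc.
  by rewrite card_setD1 ?inE // tie.
have other j : #|(m j).2 :&: voters m (~~ (m j).1)| = 1.
  have := cardsID (voters m (m j).1) (m j).2.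
  by rewrite own valid_card // voters_opp -setDE; lia.
rewrite (bigID (fun j => (m j).1 == x)) /=.
rewrite (eq_bigr (fun=> p.-1)) => [|j /eqP <-]; last exact: own.
rewrite [X in _ + X](eq_bigr (fun=> 1)) => [|j vj]; last first.
  by have -> : x = ~~ (m j).1 by case: (m j).1 (x) vj => -[].
rewrite !sum_nat_cond_const -/(voters m x).
have -> : [set j | (m j).1 != x] = voters m (~~ x).
  by apply/setP => j; rewrite !inE; case: (m j).1 (x) => -[].
by rewrite !tie muln1 -mulnSr prednK.
Qed.

Lemma outcome_half m : (forall x, ~~ has_bloc m x) ->
  (forall x, eta_count m x = p * p) -> outcome m = half_lottery.
Proof.
move=> nb eta_pp; apply/ffunP => x.
rewrite outcome_score score_no_bloc // eta_pp ffunE -mulnA natrM.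
by field; rewrite pnatr_eq0 -lt0n.
Qed.

Lemma deviate_self m i mi : deviate m i mi i = mi.
Proof. by rewrite ffunE eqxx. Qed.

Lemma deviate_other m i mi j : j != i -> deviate m i mi j = m j.
Proof. by rewrite ffunE => /negbTE ->. Qed.

Lemma valid_deviate m i mi :
  valid_profile m -> valid_msg i mi -> valid_profile (deviate m i mi).
Proof.
move=> /forallP v vi; apply/forallP => j.
by have [->|ji] := eqVneq j i; [rewrite deviate_self | rewrite deviate_other].
Qed.

Lemma is_bloc_deviate m i mi x B :
  i \notin B -> is_bloc (deviate m i mi) x B = is_bloc m x B.
Proof.
move=> iB; apply/blocP/blocP => -[B_big HB]; split => // j jB;
  have ji : j != i by apply: contraNneq iB => <-.
  by rewrite -(deviate_other m mi ji); apply: HB.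
by rewrite (deviate_other m mi ji); apply: HB.
Qed.

Lemma has_bloc_deviate m i mi x :
  x != mi.1 -> has_bloc (deviate m i mi) x -> has_bloc m x.
Proof.
move=> x_neq /existsP [B bloc_B]; apply/existsP; exists B.
have iB : i \notin B.
  apply: contra x_neq => iB; move/blocP: bloc_B => [_ /(_ i iB) []].
  by rewrite deviate_self => ->.
by rewrite -(is_bloc_deviate m mi _ iB).
Qed.

Section Equilibrium.

Variables (R : profile p) (m : mprofile p).
Hypothesis m_nash : nash_eq R m.

Lemma nash_valid : valid_profile m.
Proof. by case: m_nash. Qed.

Lemma nash_score_le i mi :
  valid_msg i mi -> score (deviate m i mi) (R i) <= score m (R i).
Proof.
by move=> vi; case: m_nash => _ /(_ i mi vi); rewrite sd_strict_score -leqNgt.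
Qed.

Lemma nash_bloc_supporters x : has_bloc m x -> p < #|supporters R x|.
Proof.
move=> bx; have v := nash_valid.
have [M bloc_M M_least] := least_bloc v bx.
have /blocP [M_big _] := bloc_M.
suff /subset_leq_card : M \subset supporters R x by lia.
apply/subsetP => i iM; rewrite inE; apply/negP => /negP Ri_neq.
have Ri : R i = ~~ x by case: (R i) (x) Ri_neq => -[].
pose mi : message p := (R i, (m i).2).
have vi : valid_msg i mi by rewrite /valid_msg /= valid_card // eqxx valid_notin.
have nb' : ~~ has_bloc (deviate m i mi) (~~ R i).
  apply/existsP => -[B bloc_B].
  have iB : i \notin B.
    apply/negP => iB; move/blocP: bloc_B => [_ /(_ i iB) []].
    by rewrite deviate_self /=; case: (R i).
  rewrite is_bloc_deviate // Ri negbK in bloc_B.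
  by move: iB; rewrite (subsetP (M_least _ bloc_B)).
have := nash_score_le vi; rewrite leqNgt score_bloc_opp ?Ri ?negbK //.
by rewrite -Ri score_pos // valid_deviate.
Qed.

Section NoBloc.

Hypothesis m_no_bloc : forall x, ~~ has_bloc m x.

Lemma nash_eta_count_le i mi : valid_msg i mi -> mi.1 = R i ->
  eta_count (deviate m i mi) (R i) <= eta_count m (R i).
Proof.
move=> vi vote_i.
have nb' : ~~ has_bloc (deviate m i mi) (~~ R i).
  apply: contra (m_no_bloc (~~ R i)); apply: has_bloc_deviate.
  by rewrite vote_i; case: (R i).
have := nash_score_le vi; rewrite [score m _]score_no_bloc //.
have [b' | nb] := boolP (has_bloc (deviate m i mi) (R i)).
  by rewrite score_bloc // leqNgt eta_count_lt_mass // nash_valid.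
by rewrite score_no_bloc.
Qed.

(* Switching one's vote to one's favourite, keeping one's names, would add
   one's positive weight to it. *)
Lemma nash_named_sincere j k : k \in (m j).2 -> (m k).1 = R k.
Proof.
move=> kc; have v := nash_valid; apply/eqP/negPn/negP => insincere.
pose mk : message p := (R k, (m k).2).
have vk : valid_msg k mk by rewrite /valid_msg /= valid_card // eqxx valid_notin.
have namers_eq l : namers (deviate m k mk) l = namers m l.
  apply/setP => j'; rewrite !inE.
  by have [->|j'k] := eqVneq j' k; [rewrite deviate_self | rewrite deviate_other].
have := nash_eta_count_le vk erefl; apply/negP; rewrite -ltnNge /eta_count.
apply: (ltn_sum (i := k)) => [l|].
  apply: vote_weight_le; rewrite namers_eq subxx.
  by have [->|lk] := eqVneq l k; [rewrite deviate_self | rewrite deviate_other].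
rewrite /vote_weight (negbTE insincere) deviate_self eqxx namers_eq card_gt0.
by apply/set0Pn; exists j; rewrite inE kc (valid_named_neq v kc).
Qed.

(* Otherwise agent i would replace the name of a non-ally l by that of k. *)
Lemma nash_names_allies i k l : k != i -> (m k).1 = R i ->
  l \in (m i).2 -> (m l).1 != R i -> k \in (m i).2.
Proof.
move=> ki vote_k lc vote_l; have v := nash_valid.
apply/negPn/negP => kc.
pose mi : message p := (R i, k |: ((m i).2 :\ l)).
have card_rem : #|(m i).2 :\ l| = p.-1 by rewrite card_setD1 // valid_card.
have vi : valid_msg i mi.
  rewrite /valid_msg /= cardsU1 card_rem !inE (negbTE kc) andbF /=.
  rewrite add1n prednK //.
  by rewrite eqxx (negbTE (valid_notin i v)) andbF orbF eq_sym.
have := nash_eta_count_le vi erefl; apply/negP; rewrite -ltnNge /eta_count.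
apply: (ltn_sum (i := k)) => [k'|].
  apply: vote_weight_le => vote_k'; split.
    have [->|k'i] := eqVneq k' i; first by rewrite deviate_self.
    by rewrite deviate_other.
  apply/subsetP => j; rewrite !inE; have [->|ji] := eqVneq j i; last first.
    by rewrite deviate_other.
  rewrite deviate_self /= !inE => /andP [ik' k'c]; rewrite ik' k'c andbT /=.
  by apply/orP; right; apply: contraNneq vote_l => <-.
rewrite /vote_weight deviate_other // vote_k eqxx.
have namers_sub : namers m k \subset namers (deviate m i mi) k :\ i.
  apply/subsetP => j; rewrite !inE => /andP [jk kc'].
  have ji : j != i by apply: contraNneq kc => <-.
  by rewrite ji jk deviate_other.
have i_namer : i \in namers (deviate m i mi) k.
  by rewrite !inE eq_sym ki deviate_self !inE eqxx.
rewrite [X in _ < X](cardsD1 i) i_namer add1n ltnS.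
exact: subset_leq_card.
Qed.

Lemma nash_naming_structure i : (m i).1 = R i ->
  (m i).2 \subset voters m (R i) :&: supporters R (R i) \/
  voters m (R i) :\ i \subset (m i).2 /\
  voters m (R i) \subset supporters R (R i).
Proof.
move=> sincere_i.
have sincere_named k : k \in (m i).2 -> R k = (m k).1.
  by move=> /nash_named_sincere ->.
have [c_voters | /subsetPn [l lc l_not]] :=
  boolP ((m i).2 \subset voters m (R i)).
  left; apply/subsetP => k kc; have := subsetP c_voters k kc.
  by rewrite !inE (sincere_named k kc) => ->.
have allies : voters m (R i) :\ i \subset (m i).2.
  apply/subsetP => k; rewrite !inE => /andP [ki /eqP vote_k].
  by apply: (nash_names_allies ki vote_k lc); rewrite inE in l_not.
right; split => //; apply/subsetP => k k_voter; rewrite inE.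
have [-> // | ki] := eqVneq k i.
have kc : k \in (m i).2 by apply: (subsetP allies); rewrite in_setD1 ki.
by move: k_voter; rewrite inE (sincere_named k kc) => ->.
Qed.

Lemma nash_no_bloc_supporters x : #|supporters R x| <= p.
Proof.
have v := nash_valid; rewrite leqNgt; apply/negP => maj.
have [big_vote | small_vote] := ltnP p #|voters m x|.
  (* The x-voters supporting x name only each other, hence form a bloc. *)
  have [j jV jS] := majorities_meet big_vote maj.
  case/negP: (m_no_bloc x); apply/existsP; exists (voters m x :&: supporters R x).
  apply: (closed_bloc (i := j) v); first by rewrite inE jV jS.
  move=> i; rewrite !inE => /andP [/eqP vote_i /eqP Ri]; split => //.
  have sincere_i : (m i).1 = R i by rewrite vote_i Ri.
  rewrite -Ri; case: (nash_naming_structure sincere_i) => [// | [allies sincere]].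
  rewrite Ri in allies sincere *.
  suff -> : (m i).2 = voters m x :\ i.
    by rewrite subsetI subD1set (subset_trans (subD1set _ _) sincere).
  apply/esym/eqP; rewrite eqEcard allies valid_card //.
  by move: big_vote; rewrite (cardsD1 i) inE vote_i eqxx add1n ltnS.
(* Some sincere opponent of x is named, and her naming pattern gives ~~ x at
   least p supporters. *)
have [j [k [kc vote_k]]] := exists_named_voter v (m_no_bloc (~~ ~~ x)).
have sincere_k := nash_named_sincere kc.
have Rk : R k = ~~ x by rewrite -sincere_k.
have := card_supporters_opp R x.
case: (nash_naming_structure sincere_k); rewrite Rk.
  rewrite subsetI => /andP [_ sub].
  have := named_card_gt v _ sub; rewrite inE Rk eqxx => /(_ isT); lia.
by move=> [_ /subset_leq_card]; have := card_voters_opp m x; lia.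
Qed.

Lemma nash_no_bloc_structure i : (m i).1 = R i ->
  voters m (R i) :\ i \subset (m i).2 /\
  voters m (R i) \subset supporters R (R i).
Proof.
move=> sincere_i; case: (nash_naming_structure sincere_i) => //.
rewrite subsetI => /andP [_ /(named_card_gt nash_valid) sub].
have := nash_no_bloc_supporters (R i); rewrite leqNgt sub //.
by rewrite inE.
Qed.

Lemma nash_no_bloc_sincere k : (m k).1 = R k.
Proof.
have [j [k0 [k0c vote_k0]]] :=
  exists_named_voter nash_valid (m_no_bloc (~~ (m k).1)).
have sincere_k0 := nash_named_sincere k0c.
have [_ sincere] := nash_no_bloc_structure sincere_k0.
have : k \in voters m (R k0) by rewrite inE -sincere_k0 vote_k0.
by move/(subsetP sincere); rewrite inE -sincere_k0 vote_k0 => /eqP.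
Qed.

Lemma nash_no_bloc_names_allies j : voters m (m j).1 :\ j \subset (m j).2.
Proof.
by have [allies _] := nash_no_bloc_structure (nash_no_bloc_sincere j);
  rewrite nash_no_bloc_sincere.
Qed.

Lemma nash_no_bloc_voters z : voters m z = supporters R z.
Proof. by apply/setP => k; rewrite !inE nash_no_bloc_sincere. Qed.

End NoBloc.

Lemma nash_majority_outcome x : p < #|supporters R x| -> outcome m = pure x.
Proof.
move=> maj; have [bx | nbx] := boolP (has_bloc m x); first exact: outcome_bloc.
exfalso; have [bnx | nbnx] := boolP (has_bloc m (~~ x)).
  by have := nash_bloc_supporters bnx; have := card_supporters_opp R x; lia.
have nb z : ~~ has_bloc m z by case: z; case: (x) nbx nbnx.
by have := nash_no_bloc_supporters nb x; rewrite leqNgt maj.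
Qed.

Lemma nash_tie_outcome :
  (forall z, #|supporters R z| = p) -> outcome m = half_lottery.
Proof.
move=> tie; have nb z : ~~ has_bloc m z.
  by apply/negP => /nash_bloc_supporters; rewrite tie ltnn.
apply: (outcome_half nb) => x; apply: (eta_count_tie x nash_valid) => [z | j].
  by rewrite (nash_no_bloc_voters nb).
exact: nash_no_bloc_names_allies nb j.
Qed.

End Equilibrium.

Definition majority_names R x j : {set agent p} :=
  odflt set0
    [pick B : {set agent p} | (B \subset supporters R x :\ j) && (#|B| == p)].

Lemma majority_names_spec R x j : p < #|supporters R x| ->
  majority_names R x j \subset supporters R x :\ j /\ #|majority_names R x j| = p.
Proof.
move=> maj; rewrite /majority_names.
case: pickP => [B /andP [sub /eqP card_B] | none] //.
have : p <= #|supporters R x :\ j|.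
  move: maj; rewrite (cardsD1 j).
  by case: (j \in _); rewrite ?add1n ?add0n ?ltnS // => /ltnW.
case/exists_subset_card => B sub card_B.
by have := none B; rewrite sub card_B eqxx.
Qed.

Definition majority_profile R x : mprofile p :=
  [ffun j => (x, majority_names R x j)].

Lemma majority_profile_nash R x : p < #|supporters R x| ->
  nash_eq R (majority_profile R x).
Proof.
move=> maj; set m := majority_profile R x.
have v : valid_profile m.
  apply/forallP => j; have [sub card_c] := majority_names_spec j maj.
  rewrite /valid_msg ffunE /= card_c eqxx; apply/negP => /(subsetP sub).
  by rewrite !inE eqxx.
have bloc_S : is_bloc m x (supporters R x).
  apply/blocP; split => // k _; rewrite ffunE; split => //.
  have [sub _] := majority_names_spec k maj.
  exact: subset_trans sub (subD1set _ _).
have bx : has_bloc m x by apply/existsP; exists (supporters R x).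
split => // i mi vi; rewrite sd_strict_score -leqNgt.
have [<- | Ri_neq] := eqVneq x (R i).
  by rewrite [score m x]score_bloc // score_le_mass // valid_deviate.
have x_opp : ~~ R i = x by move: Ri_neq; case: (R i); case: (x).
rewrite [score (deviate _ _ _) _]score_bloc_opp // x_opp.
by apply/existsP; exists (supporters R x); rewrite is_bloc_deviate // inE eq_sym.
Qed.

Section Tie.

Variable R : profile p.
Hypothesis R_tie : forall z, #|supporters R z| = p.

Definition opponent j : agent p := odflt j [pick k in supporters R (~~ R j)].

Lemma opponent_opp j : R (opponent j) = ~~ R j.
Proof.
rewrite /opponent; case: pickP => [k | none] /=; first by rewrite inE => /eqP.
by exfalso; have := R_tie (~~ R j); rewrite (eq_card0 none); lia.
Qed.

Definition tie_profile : mprofile p :=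
  [ffun j => (R j, opponent j |: (supporters R (R j) :\ j))].

Lemma tie_profile_vote k : (tie_profile k).1 = R k.
Proof. by rewrite ffunE. Qed.

Lemma tie_profile_valid : valid_profile tie_profile.
Proof.
apply/forallP => j; rewrite /valid_msg ffunE /=.
have opp := opponent_opp j.
have opp_out : opponent j \notin supporters R (R j) :\ j.
  by rewrite !inE opp; case: (R j); rewrite andbF.
rewrite cardsU1 opp_out card_setD1 ?inE // R_tie add1n prednK // eqxx /=.
rewrite eqxx andFb orbF.
by apply/eqP => j_opp; move: opp; rewrite -j_opp; case: (R j).
Qed.

Lemma tie_profile_nash : nash_eq R tie_profile.
Proof.
have v := tie_profile_valid.
have no_bloc_of_sincere m z :
    (forall k, (m k).1 == z -> R k = z) -> ~~ has_bloc m z.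
  move=> sincere; apply: few_voters_no_bloc.
  suff /subset_leq_card : voters m z \subset supporters R z by rewrite R_tie.
  by apply/subsetP => k; rewrite !inE => /sincere ->.
have nb z : ~~ has_bloc tie_profile z.
  by apply: no_bloc_of_sincere => k; rewrite tie_profile_vote => /eqP.
split => // i mi vi.
rewrite sd_strict_score -leqNgt [score tie_profile _]score_no_bloc //.
set m' := deviate tie_profile i mi.
have sincere' k : (m' k).1 == R i -> R k = R i.
  have [-> // | ki] := eqVneq k i.
  by rewrite deviate_other // tie_profile_vote => /eqP.
have [b' | nb'] := boolP (has_bloc m' (~~ R i)); first by rewrite score_bloc_opp.
have nb_Ri : ~~ has_bloc m' (R i) := no_bloc_of_sincere _ _ sincere'.
rewrite score_no_bloc //.
apply: eta_count_le => k /[dup] /sincere' Rk vote_k; split.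
  by rewrite tie_profile_vote Rk.
apply/subsetP => j; rewrite !inE => /andP [jk kc]; rewrite jk /=.
have [ji | ji] := eqVneq j i; last by move: kc; rewrite deviate_other.
rewrite ji ffunE /= !inE Rk eqxx andbT -ji; apply/orP; right.
by rewrite eq_sym.
Qed.

End Tie.

End BlocMechanism.

Lemma Maj_single p (R : profile p) x : Maj R = [set x] -> p < #|supporters R x|.
Proof.
rewrite /Maj; case: ifP => [maj /set1_inj <- // | _].
case: ifP => [maj /set1_inj <- // | _] all_x.
by have := in_setT (~~ x); rewrite all_x inE; case: (x).
Qed.

Lemma Maj_all p (R : profile p) :
  Maj R = [set: alt] -> forall z, #|supporters R z| = p.
Proof.
rewrite /Maj; case: ifP => [_ single | no_a].
  by have := in_setT false; rewrite -single inE.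
case: ifP => [_ single | no_b _].
  by have := in_setT true; rewrite -single inE.
move/negbT: no_a; move/negbT: no_b; rewrite -!leqNgt /opt_a /opt_b => le_b le_a.
have le_p z : #|supporters R z| <= p by case: z.
move=> z; have := card_supporters_opp R z; have := le_p z; have := le_p (~~ z).
lia.
Qed.

Theorem lemma3 (p : nat) (hp : 0 < p) (R : profile p) :
  (forall x : alt, Maj R = [set x] ->
     (exists m, nash_eq R m) /\
     (forall m, nash_eq R m -> outcome m = pure x)) /\
  (Maj R = [set: alt] ->
     (exists m, nash_eq R m) /\
     (forall m, nash_eq R m -> outcome m = half_lottery)).
Proof.
split=> [x /Maj_single maj | /Maj_all tie]; split.
- by exists (majority_profile R x); apply: majority_profile_nash.
- by move=> m m_nash; exact: (nash_majority_outcome hp m_nash maj).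
- by exists (tie_profile R); apply: tie_profile_nash.
- by move=> m m_nash; exact: (nash_tie_outcome hp m_nash tie).
Qed.
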